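(* Let $\Gamma$ be a context and $A$ a type. If for all possible-world models $\mathcal{M}$ with a reflexive–transitive frame it is the case that $\mathcal{M}([\![\Gamma]\!],[\![A]\!])$ is inhabited, then there is a term $t$ of type $A$ in context $\Gamma$ of $\mathrm{IS4}_C$.
   Context: Types $A::=\iota\mid A\to B\mid\Box A$; contexts $\Gamma::=\cdot\mid\Gamma,A\mid\Gamma,\mathsf{lock}$ ($\mathsf{lock}$ the context lock). A possible-world model is a frame $(W,R_i,R_m)$ ($R_i$ reflexive transitive; factorization $R_m;R_i\subseteq R_i;R_m$) plus a valuation $V_\iota$ monotone along $R_i$; ''reflexive–transitive frame'' means $R_m$ is also reflexive and transitive. $\mathcal{M}(X,Y)$ is the type of families $\forall w.\,X_w\to Y_w$. Interpretation: $[\![\iota]\!]_w=V_{\iota,w}$, $[\![A\to B]\!]_w=\forall w'.\,w\mathrel{R_i}w'\to[\![A]\!]_{w'}\to[\![B]\!]_{w'}$, $[\![\Box A]\!]_w=\forall w'.\,w\mathrel{R_i}w'\to\forall v.\,w'\mathrel{R_m}v\to[\![A]\!]_v$, $[\![\cdot]\!]_w=\top$, $[\![\Gamma,A]\!]_w=[\![\Gamma]\!]_w\times[\![A]\!]_w$, $[\![\Gamma,\mathsf{lock}]\!]_w=\sum_u[\![\Gamma]\!]_u\times(u\mathrel{R_m}w)$. $\mathrm{IS4}_C$ terms: STLC plus $\mathsf{box}\,t:\Box A$ in $\Gamma$ from $t:A$ in $\Gamma,\mathsf{lock}$, and $\mathsf{unbox}(t,e):A$ in $\Gamma$ from $t:\Box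 A$ in $\Delta$ where $\Gamma$ extends $\Delta$ by any types and locks. *)

Inductive Ty : Type :=
| iota : Ty
| arr : Ty -> Ty -> Ty
| box : Ty -> Ty.

Inductive Ctx : Type :=
| cnil : Ctx
| cext : Ctx -> Ty -> Ctx
| clock : Ctx -> Ctx.

(** Variables: de Bruijn indices into the lock-free suffix of a context. *)
Inductive Var : Ctx -> Ty -> Type :=
| vze : forall G A, Var (cext G A) A
| vsu : forall G A B, Var G A -> Var (cext G B) A.

Inductive Ext : Ctx -> Ctx -> Type :=
| ext_nil : forall G, Ext G G
| ext_ty : forall D G A, Ext D G -> Ext D (cext G A)
| ext_lock : forall D G, Ext D G -> Ext D (clock G).

Inductive Tm : Ctx -> Ty -> Type :=
| var : forall G A, Var G A -> Tm G A
| lam : forall G A B, Tm (cext G A) B -> Tm G (arr A B)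
| app : forall G A B, Tm G (arr A B) -> Tm G A -> Tm G B
| tbox : forall G A, Tm (clock G) A -> Tm G (box A)
| unbox : forall G D A, Tm D (box A) -> Ext D G -> Tm G A.

Record Model : Type := {
  W : Type;
  Ri : W -> W -> Type;
  Rm : W -> W -> Type;
  Ri_refl : forall w, Ri w w;
  Ri_trans : forall w v u, Ri w v -> Ri v u -> Ri w u;
  factor : forall w v u, Rm w v -> Ri v u -> { w' : W & (Ri w w' * Rm w' u)%type };
  Vi : W -> Type;
  Vi_mono : forall w w', Ri w w' -> Vi w -> Vi w'
}.

Definition RTFrame (M : Model) : Type :=
  ((forall w, Rm M w w) *
   (forall w v u, Rm M w v -> Rm M v u -> Rm M w u))%type.

Fixpoint tyI (M : Model) (A : Ty) : W M -> Type :=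
  match A with
  | iota => fun w => Vi M w
  | arr A B => fun w => forall w', Ri M w w' -> tyI M A w' -> tyI M B w'
  | box A => fun w => forall w', Ri M w w' -> forall v, Rm M w' v -> tyI M A v
  end.

Fixpoint ctxI (M : Model) (G : Ctx) : W M -> Type :=
  match G with
  | cnil => fun _ => unit
  | cext G A => fun w => (ctxI M G w * tyI M A w)%type
  | clock G => fun w => { u : W M & (ctxI M G u * Rm M u w)%type }
  end.

Definition Hom (M : Model) (X Y : W M -> Type) : Type := forall w, X w -> Y w.

(** Normalisation by evaluation. Contexts form a possible-world model with
    weakenings as [R_i], context extensions as [R_m] and terms of type [iota]
    as the valuation; its frame is reflexive–transitive. In it, every type
    admits maps in both directions between terms and semantic values (reflect
    and reify), so evaluating the given semantic morphism at the environment
    of reflected variables and reifying the result yields a term. *)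


Inductive Wk : Ctx -> Ctx -> Type :=
| wk_nil : Wk cnil cnil
| wk_drop : forall G D A, Wk G D -> Wk G (cext D A)
| wk_keep : forall G D A, Wk G D -> Wk (cext G A) (cext D A)
| wk_keep_lock : forall G D, Wk G D -> Wk (clock G) (clock D).

Lemma wk_id (G : Ctx) : Wk G G.
Proof.
  induction G; constructor; assumption.
Qed.

Lemma wk_comp (G H K : Ctx) : Wk G H -> Wk H K -> Wk G K.
Proof.
  intros w1 w2; revert G w1; induction w2; intros G0 w1.
  - exact w1.
  - apply wk_drop; auto.
  - inversion w1 as [|? ? ? w1'|? ? ? w1'|]; subst.
    + apply wk_drop; auto.
    + apply wk_keep; auto.
  - inversion w1 as [| | |? ? w1']; subst.
    apply wk_keep_lock; auto.
Qed.

Lemma ext_comp (D G K : Ctx) : Ext D G -> Ext G K -> Ext D K.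
Proof.
  intros e1 e2; induction e2; [exact e1 | apply ext_ty | apply ext_lock]; auto.
Qed.

Lemma ext_wk_factor (D G G' : Ctx) :
  Ext D G -> Wk G G' -> { D' : Ctx & (Wk D D' * Ext D' G')%type }.
Proof.
  intros e w; revert D e; induction w; intros D0 e.
  - exists D0; split; [apply wk_id | exact e].
  - destruct (IHw D0 e) as [D' [w' e']].
    exists D'; split; [exact w' | apply ext_ty, e'].
  - inversion e as [|? ? ? e'|]; subst.
    + exists (cext D A); split; [apply wk_keep, w | apply ext_nil].
    + destruct (IHw D0 e') as [D' [w' e'']].
      exists D'; split; [exact w' | apply ext_ty, e''].
  - inversion e as [| |? ? e']; subst.
    + exists (clock D); split; [apply wk_keep_lock, w | apply ext_nil].
    + destruct (IHw D0 e') as [D' [w' e'']].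
      exists D'; split; [exact w' | apply ext_lock, e''].
Qed.

Lemma wk_var (G D : Ctx) (A : Ty) : Wk G D -> Var G A -> Var D A.
Proof.
  intros w; revert A; induction w; intros A0 v.
  - exact v.
  - apply vsu; auto.
  - inversion v as [|? ? ? v']; subst.
    + apply vze.
    + apply vsu; auto.
  - inversion v.
Qed.

Lemma wk_tm (G D : Ctx) (A : Ty) : Wk G D -> Tm G A -> Tm D A.
Proof.
  intros w t; revert D w; induction t; intros D0 w.
  - apply var; eapply wk_var; eauto.
  - apply lam, IHt, wk_keep, w.
  - eapply app; eauto.
  - apply tbox, IHt, wk_keep_lock, w.
  - destruct (ext_wk_factor _ _ _ e w) as [D' [w' e']].
    exact (unbox _ _ _ (IHt D' w') e').
Qed.

Definition term_model : Model := {|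
  W := Ctx;
  Ri := Wk;
  Rm := Ext;
  Ri_refl := wk_id;
  Ri_trans := wk_comp;
  factor := ext_wk_factor;
  Vi := fun G => Tm G iota;
  Vi_mono := fun G G' w t => wk_tm G G' iota w t
|}.

Lemma term_model_rt : RTFrame term_model.
Proof.
  split; [exact ext_nil | exact ext_comp].
Qed.

Lemma tyI_mono (M : Model) (A : Ty) (w w' : W M) :
  Ri M w w' -> tyI M A w -> tyI M A w'.
Proof.
  destruct A; simpl; intros r x.
  - exact (Vi_mono M w w' r x).
  - intros w'' r' a; exact (x w'' (Ri_trans M _ _ _ r r') a).
  - intros w'' r' v m; exact (x w'' (Ri_trans M _ _ _ r r') v m).
Qed.

Lemma ctxI_mono (M : Model) (G : Ctx) (w w' : W M) :
  Ri M w w' -> ctxI M G w -> ctxI M G w'.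
Proof.
  revert w w'; induction G; simpl; intros w w' r x.
  - exact tt.
  - destruct x as [g a]; split; [exact (IHG w w' r g) | exact (tyI_mono M t w w' r a)].
  - destruct x as [u [g m]].
    destruct (factor M _ _ _ m r) as [u' [r' m']].
    exists u'; split; [exact (IHG u u' r' g) | exact m'].
Qed.

Lemma reflect_reify (A : Ty) (G : Ctx) :
  (Tm G A -> tyI term_model A G) * (tyI term_model A G -> Tm G A).
Proof.
  revert G; induction A as [|A IHA B IHB|A IHA]; intros G; simpl; split.
  - exact (fun t => t).
  - exact (fun t => t).
  - intros t G' w a.
    apply (fst (IHB G')).
    exact (app _ _ _ (wk_tm _ _ _ w t) (snd (IHA G') a)).
  - intros f; apply lam, (snd (IHB _)).
    apply (f _ (wk_drop _ _ A (wk_id G))).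
    apply (fst (IHA _)), var, vze.
  - intros t G' w D e.
    apply (fst (IHA D)).
    exact (unbox _ _ _ (wk_tm _ _ _ w t) e).
  - intros f; apply tbox, (snd (IHA _)).
    exact (f G (wk_id G) (clock G) (ext_lock _ _ (ext_nil G))).
Qed.

Lemma ctxI_term_model_id (G : Ctx) : ctxI term_model G G.
Proof.
  induction G as [|G IHG A|G IHG]; simpl.
  - exact tt.
  - split.
    + exact (ctxI_mono term_model G G (cext G A) (wk_drop _ _ A (wk_id G)) IHG).
    + apply (fst (reflect_reify A _)), var, vze.
  - exists G; split; [exact IHG | exact (ext_lock _ _ (ext_nil G))].
Qed.

Theorem theorem8 (G : Ctx) (A : Ty) :
  (forall M : Model, RTFrame M -> inhabited (Hom M (ctxI M G) (tyI M A))) ->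
  inhabited (Tm G A).
Proof.
  intros valid.
  destruct (valid term_model term_model_rt) as [eval].
  constructor.
  exact (snd (reflect_reify A G) (eval G (ctxI_term_model_id G))).
Qed.
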